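(* Let $n,k$ be integers with $2\le k\le n/2$ such that $p=\gcd(n,k-1)>1$, and let $q=n/p$. Choose positive angles $\theta_1,\dots,\theta_p$ with $\theta_1+\dots+\theta_p=2\pi/q$. Divide the unit circle into $q$ equal arcs, and divide each of these arcs into $p$ consecutive arcs of angular lengths $\theta_1,\dots,\theta_p$, in this order. Then the inscribed $n$-gon whose vertices are the $n$ resulting division points is a Gutkin $(n,k)$-gon.
   Context: Let $P$ be a convex $n$-gon in the Euclidean plane with vertices $v_0,\dots,v_{n-1}$ in their cyclic (counterclockwise) order, indices taken modulo $n$. $P$ is a Gutkin $(n,k)$-gon if there exists an angle $\alpha$ such that for every $i$, $\angle v_{i+1}v_iv_{i+k}=\angle v_{i+k-1}v_{i+k}v_i=\alpha$, where $\angle abc$ denotes the angle at $b$ between the segments $ba$ and $bc$. *)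

From Stdlib Require Import Reals Lra Lia Arith.
Open Scope R_scope.

Definition point : Type := (R * R)%type.

Definition dot (u w : point) : R := fst u * fst w + snd u * snd w.
Definition vsub (u w : point) : point := (fst u - fst w, snd u - snd w).
Definition vnorm (u : point) : R := sqrt (dot u u).
Definition cross3 (a b c : point) : R :=
  let u := vsub b a in let w := vsub c a in fst u * snd w - snd u * fst w.

Definition angle (a b c : point) : R :=
  acos (dot (vsub a b) (vsub c b) / (vnorm (vsub a b) * vnorm (vsub c b))).

Definition vtx (n : nat) (v : nat -> point) (i : nat) : point := v (i mod n).

(* v_0, ..., v_{n-1} are the vertices, in counterclockwise cyclic order,
   of a (strictly) convex n-gon: every other vertex lies strictly to the
   left of each directed edge v_i v_{i+1}. *)
Definition convex_ccw_polygon (n : nat) (v : nat -> point) : Prop :=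
  (3 <= n)%nat /\
  forall i j : nat, (i < n)%nat -> (j < n)%nat -> j <> i -> j <> ((i + 1) mod n)%nat ->
    cross3 (vtx n v i) (vtx n v (i + 1)) (vtx n v j) > 0.

Definition gutkin (n k : nat) (v : nat -> point) : Prop :=
  convex_ccw_polygon n v /\
  exists alpha : R, forall i : nat,
    angle (vtx n v (i + 1)) (vtx n v i) (vtx n v (i + k)) = alpha /\
    angle (vtx n v (i + k - 1)) (vtx n v (i + k)) (vtx n v i) = alpha.

Fixpoint psum (th : nat -> R) (m : nat) : R :=
  match m with O => 0 | S m' => psum th m' + th m' end.

(* the division points: vertex i = r*p + j (j < p) sits at angle
   2*pi*r/q + theta_1 + ... + theta_j (theta indexed from 0 here) *)
Definition division_point (p q : nat) (th : nat -> R) (i : nat) : point :=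
  let phi := 2 * PI * INR (i / p) / INR q + psum th (i mod p) in
  (cos phi, sin phi).

From Stdlib Require Import Reals Lra Lia Arith.
Open Scope R_scope.

(* The vertices lie on the unit circle at strictly increasing angles that gain
   exactly one full turn every n steps, so the inscribed polygon is convex.  By
   the inscribed angle theorem the angle at v_i between v_{i+1} and v_{i+k} is
   half the arc from v_{i+1} to v_{i+k}, and the angle at v_{i+k} between
   v_{i+k-1} and v_i is half the arc from v_i to v_{i+k-1}.  Both arcs consist of
   k-1 consecutive division arcs; since p divides k-1 they cover (k-1)/p whole
   blocks of length 2 pi/q, independently of i. *)

Definition unit_pt (t : R) : point := (cos t, sin t).

Lemma vsub_unit_pt_mid m h :
  vsub (unit_pt (m + h)) (unit_pt (m - h)) = (2 * sin h * - sin m, 2 * sin h * cos m).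
Proof.
  unfold vsub, unit_pt; simpl.
  rewrite cos_plus, cos_minus, sin_plus, sin_minus; f_equal; ring.
Qed.

Lemma vsub_unit_pt a b :
  vsub (unit_pt b) (unit_pt a) =
  (2 * sin ((b - a) / 2) * - sin ((a + b) / 2), 2 * sin ((b - a) / 2) * cos ((a + b) / 2)).
Proof.
  rewrite <- vsub_unit_pt_mid.
  f_equal; f_equal; f_equal; field.
Qed.

Lemma vnorm_chord a b : vnorm (vsub (unit_pt b) (unit_pt a)) = 2 * Rabs (sin ((b - a) / 2)).
Proof.
  unfold vnorm, dot; rewrite vsub_unit_pt; simpl.
  set (s := sin ((b - a) / 2)); set (m := (a + b) / 2).
  replace (2 * s * - sin m * (2 * s * - sin m) + 2 * s * cos m * (2 * s * cos m))
    with (Rsqr (2 * s)).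
  - rewrite sqrt_Rsqr_abs, Rabs_mult, (Rabs_right 2) by lra; reflexivity.
  - pose proof (sin2_cos2 m) as Hm; unfold Rsqr in *; nra.
Qed.

Lemma cross3_unit_pt a b c :
  cross3 (unit_pt a) (unit_pt b) (unit_pt c) =
  4 * sin ((b - a) / 2) * sin ((c - a) / 2) * sin ((c - b) / 2).
Proof.
  unfold cross3; rewrite !vsub_unit_pt; simpl.
  replace ((c - b) / 2) with ((a + c) / 2 - (a + b) / 2) by field.
  rewrite sin_minus; ring.
Qed.

(* The sign condition holds e.g. when a < b, c < a + 2 pi. *)
Lemma inscribed_angle a b c : 0 < sin ((b - a) / 2) * sin ((c - a) / 2) ->
  angle (unit_pt b) (unit_pt a) (unit_pt c) = acos (cos ((c - b) / 2)).
Proof.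
  intro Hsame; unfold angle; rewrite !vnorm_chord; f_equal.
  unfold dot; rewrite !vsub_unit_pt; simpl.
  replace (2 * Rabs (sin ((b - a) / 2)) * (2 * Rabs (sin ((c - a) / 2))))
    with (4 * (sin ((b - a) / 2) * sin ((c - a) / 2)))
    by (rewrite <- (Rabs_right (sin ((b - a) / 2) * sin ((c - a) / 2))), Rabs_mult by lra; ring).
  replace ((c - b) / 2) with ((a + c) / 2 - (a + b) / 2) by field.
  rewrite cos_minus; field.
  split; intro Hz; rewrite Hz in Hsame; lra.
Qed.

Section InscribedPolygon.

Variables (n : nat) (v : nat -> point) (ph : nat -> R).
Hypothesis ph_lt : forall a b, (a < b)%nat -> ph a < ph b.
Hypothesis ph_period : forall m, ph (m + n) = ph m + 2 * PI.
Hypothesis vtx_ph : forall m, vtx n v m = unit_pt (ph m).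

Lemma sin_half_arc_pos a b : (a < b < a + n)%nat -> 0 < sin ((ph b - ph a) / 2).
Proof.
  intros [Hab Hba]; apply sin_gt_0.
  - pose proof (ph_lt a b Hab); lra.
  - pose proof (ph_lt b (a + n) Hba); pose proof (ph_period a); lra.
Qed.

Lemma sin_half_arc_neg a b : (a < b < a + n)%nat -> sin ((ph a - ph b) / 2) < 0.
Proof.
  intro Hab; replace ((ph a - ph b) / 2) with (- ((ph b - ph a) / 2)) by field.
  rewrite sin_neg; pose proof (sin_half_arc_pos a b Hab); lra.
Qed.

Lemma cross3_vtx_pos i j l : (i < j < l)%nat -> (l < i + n)%nat ->
  cross3 (vtx n v i) (vtx n v j) (vtx n v l) > 0.
Proof.
  intros Hijl Hl; rewrite !vtx_ph, cross3_unit_pt.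
  pose proof (sin_half_arc_pos i j ltac:(lia)).
  pose proof (sin_half_arc_pos i l ltac:(lia)).
  pose proof (sin_half_arc_pos j l ltac:(lia)).
  apply Rlt_gt; repeat apply Rmult_lt_0_compat; lra.
Qed.

Lemma inscribed_convex : (3 <= n)%nat -> convex_ccw_polygon n v.
Proof.
  intro Hn; split; [exact Hn |].
  intros i j Hi Hj Hji Hjs.
  assert (Hcases : (i + 1 < j)%nat \/ (j < i /\ i + 1 < j + n)%nat).
  { destruct (Nat.eq_dec (i + 1) n) as [E | E].
    - rewrite E, Nat.Div0.mod_same in Hjs; lia.
    - rewrite Nat.mod_small in Hjs by lia; lia. }
  destruct Hcases as [Hc | Hc].
  - apply cross3_vtx_pos; lia.
  - replace (vtx n v j) with (vtx n v (j + n)).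
    + apply cross3_vtx_pos; lia.
    + unfold vtx; replace (j + n)%nat with (j + 1 * n)%nat by lia.
      rewrite Nat.Div0.mod_add; reflexivity.
Qed.

Lemma inscribed_gutkin k c : (2 <= k)%nat -> (k < n)%nat -> (3 <= n)%nat ->
  (forall i, ph (i + (k - 1)) = ph i + c) -> gutkin n k v.
Proof.
  intros Hk Hkn Hn Hshift; split; [exact (inscribed_convex Hn) |].
  exists (acos (cos (c / 2))); intro i; rewrite !vtx_ph; split.
  - rewrite inscribed_angle.
    + replace (i + k)%nat with (i + 1 + (k - 1))%nat by lia.
      rewrite Hshift; do 2 f_equal; field.
    + pose proof (sin_half_arc_pos i (i + 1) ltac:(lia)).
      pose proof (sin_half_arc_pos i (i + k) ltac:(lia)).
      apply Rmult_lt_0_compat; lra.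
  - rewrite inscribed_angle.
    + replace (i + k - 1)%nat with (i + (k - 1))%nat by lia.
      rewrite Hshift; replace ((ph i - (ph i + c)) / 2) with (- (c / 2)) by field.
      rewrite cos_neg; reflexivity.
    + pose proof (sin_half_arc_neg (i + k - 1) (i + k) ltac:(lia)).
      pose proof (sin_half_arc_neg i (i + k) ltac:(lia)).
      nra.
Qed.

End InscribedPolygon.

Section DivisionPoints.

Variables (p q : nat) (th : nat -> R).
Hypothesis p_pos : (0 < p)%nat.
Hypothesis q_pos : (0 < q)%nat.

Definition division_angle (m : nat) : R :=
  2 * PI * INR (m / p) / INR q + psum th (m mod p).

Lemma INR_q_neq0 : INR q <> 0.
Proof. apply not_0_INR; lia. Qed.

Lemma division_angle_div_mod d r : (r < p)%nat ->
  division_angle (p * d + r) = 2 * PI * INR d / INR q + psum th r.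
Proof.
  intro Hr; unfold division_angle.
  replace ((p * d + r) / p)%nat with d.
  - rewrite Nat.add_comm, Nat.mul_comm, Nat.Div0.mod_add, Nat.mod_small by lia.
    reflexivity.
  - rewrite Nat.mul_comm, Nat.div_add_l, Nat.div_small by lia; lia.
Qed.

Lemma division_angle_add_mul m s :
  division_angle (m + p * s) = division_angle m + INR s * (2 * PI / INR q).
Proof.
  rewrite (Nat.div_mod_eq m p).
  pose proof (Nat.mod_upper_bound m p ltac:(lia)).
  replace (p * (m / p) + m mod p + p * s)%nat with (p * (m / p + s) + m mod p)%nat by lia.
  rewrite !division_angle_div_mod, plus_INR by lia.
  field; exact INR_q_neq0.
Qed.

Lemma division_angle_period m : division_angle (m + p * q) = division_angle m + 2 * PI.
Proof.
  rewrite division_angle_add_mul; field; exact INR_q_neq0.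
Qed.

Lemma vtx_division_point m :
  vtx (p * q) (division_point p q th) m = unit_pt (division_angle m).
Proof.
  unfold vtx; rewrite (Nat.div_mod_eq m (p * q)) at 2.
  replace (p * q * (m / (p * q)) + m mod (p * q))%nat
    with (m mod (p * q) + p * (q * (m / (p * q))))%nat by lia.
  rewrite division_angle_add_mul, mult_INR.
  replace (INR q * INR (m / (p * q)) * (2 * PI / INR q))
    with (2 * INR (m / (p * q)) * PI) by (field; exact INR_q_neq0).
  unfold unit_pt; rewrite cos_period, sin_period; reflexivity.
Qed.

Hypothesis th_pos : forall j, (j < p)%nat -> 0 < th j.
Hypothesis th_sum : psum th p = 2 * PI / INR q.

(* Completing a block of p arcs moves on to the next multiple of 2 pi/q. *)
Lemma division_angle_succ m : division_angle (m + 1) = division_angle m + th (m mod p).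
Proof.
  rewrite (Nat.div_mod_eq m p).
  pose proof (Nat.mod_upper_bound m p ltac:(lia)).
  set (d := (m / p)%nat); set (r := (m mod p)%nat).
  rewrite division_angle_div_mod by lia.
  replace ((p * d + r) mod p)%nat with r
    by (rewrite Nat.add_comm, Nat.mul_comm, Nat.Div0.mod_add, Nat.mod_small by lia; reflexivity).
  destruct (Nat.eq_dec (r + 1) p) as [Hlast | Hlast].
  - replace (p * d + r + 1)%nat with (p * (d + 1) + 0)%nat by lia.
    rewrite division_angle_div_mod, plus_INR, INR_1 by lia.
    replace (2 * PI * (INR d + 1) / INR q) with (2 * PI * INR d / INR q + 2 * PI / INR q)
      by (field; exact INR_q_neq0).
    rewrite <- th_sum, <- Hlast, Nat.add_1_r; simpl; ring.
  - replace (p * d + r + 1)%nat with (p * d + S r)%nat by lia.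
    rewrite division_angle_div_mod by lia; simpl; ring.
Qed.

Lemma division_angle_lt a b : (a < b)%nat -> division_angle a < division_angle b.
Proof.
  induction 1 as [| b Hab IH];
    rewrite <- Nat.add_1_r, division_angle_succ;
    match goal with |- context [th (?m mod p)] =>
      pose proof (th_pos _ (Nat.mod_upper_bound m p ltac:(lia))) end; lra.
Qed.

End DivisionPoints.

Theorem mainTheorem13 (n k : nat) (th : nat -> R) :
  (2 <= k)%nat -> (2 * k <= n)%nat ->
  (1 < Nat.gcd n (k - 1))%nat ->
  (forall j : nat, (j < Nat.gcd n (k - 1))%nat -> 0 < th j) ->
  psum th (Nat.gcd n (k - 1)) = 2 * PI / INR (n / Nat.gcd n (k - 1)) ->
  gutkin n k (division_point (Nat.gcd n (k - 1)) (n / Nat.gcd n (k - 1)) th).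
Proof.
  intros Hk Hkn Hgcd Hpos Hsum.
  set (p := Nat.gcd n (k - 1)) in *; set (q := (n / p)%nat) in *.
  destruct (Nat.gcd_divide_l n (k - 1)) as [m Hn].
  destruct (Nat.gcd_divide_r n (k - 1)) as [t Hk1].
  fold p in Hn, Hk1.
  assert (Hnpq : n = (p * q)%nat) by (unfold q; rewrite Hn, Nat.div_mul; lia).
  assert (Hq_pos : (0 < q)%nat) by (destruct q; lia).
  rewrite Hnpq.
  apply (inscribed_gutkin (p * q) _ (division_angle p q th)
           (division_angle_lt p q th ltac:(lia) Hq_pos Hpos Hsum)
           (division_angle_period p q th ltac:(lia) Hq_pos)
           (vtx_division_point p q th ltac:(lia) Hq_pos)
           k (INR t * (2 * PI / INR q))); try lia.
  intro i; rewrite Hk1, Nat.mul_comm; exact (division_angle_add_mul p q th ltac:(lia) Hq_pos i t).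
Qed.
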